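(* Let $(R_1,\mathfrak n_1,k)$ and $(R_2,\mathfrak n_2,k)$ be Noetherian local rings of positive depth with the same residue field $k$, and let $R=R_1\times_k R_2=\{(s,t)\in R_1\times R_2\mid \pi_1(s)=\pi_2(t)\}$ be their fiber product, where $\pi_j\colon R_j\to k$ are the canonical surjections. Let $i_1\colon\mathfrak n_1\to R$, $x\mapsto (x,0)$ and $i_2\colon \mathfrak n_2\to R$, $y\mapsto (0,y)$. Then $$\mathcal T(R)=\{i_1(I)\oplus i_2(J)\mid I\in X_1,\ J\in X_2\}\cup\{R\},$$ where, for $j=1,2$: $X_j=\{\mathfrak n_j\}$ if $R_j$ is a discrete valuation ring, and $X_j=\mathcal T(R_j)\setminus\{R_j\}$ if $R_j$ is not a discrete valuation ring.
   Context: For a ring $A$, the trace ideal of an $A$-module $M$ is $\mathrm{tr}_A(M)=\sum_{f\in\mathrm{Hom}_A(M,A)}\mathrm{Im}f$; an ideal is a trace ideal if it equals $\mathrm{tr}_A(M)$ for some $M$. $\mathcal T(A)$ denotes the set of trace ideals of $A$ containing a non-zerodivisor of $A$. Here $i_1(I)\oplus i_2(J)=\{(x,y)\mid x\in I,\ y\in J\}\subseteq R$. *)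

From HB Require Import structures.
From mathcomp Require Import all_boot all_order all_algebra.
Set Implicit Arguments. Unset Strict Implicit. Unset Printing Implicit Defensive.
Import Order.TTheory GRing.Theory.
Local Open Scope ring_scope.

(** Subsets of a ring are represented as Prop-valued predicates;
    two subsets are identified when extensionally equal ([eqset]). *)
Definition eqset (T : Type) (A B : T -> Prop) := forall x, A x <-> B x.

Section RingNotions.
Variable A : comNzRingType.

Definition is_unit (x : A) := exists y, x * y = 1.

Definition is_ideal (I : A -> Prop) :=
  I 0 /\ (forall x y, I x -> I y -> I (x + y)) /\ (forall a x, I x -> I (a * x)).

Definition noetherian :=
  forall I : nat -> A -> Prop, (forall n, is_ideal (I n)) ->
    (forall n x, I n x -> I n.+1 x) ->
    exists N, forall n, (N <= n)%N -> eqset (I n) (I N).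

(** Local ring: the non-units are closed under addition (1 <> 0 since A is nz). *)
Definition local_ring :=
  forall x y, ~ is_unit x -> ~ is_unit y -> ~ is_unit (x + y).

Definition nzd (x : A) := forall y, x * y = 0 -> y = 0.

Definition integral_domain := forall x y : A, x * y = 0 -> x = 0 \/ y = 0.

Definition principal_ideal_ring :=
  forall I, is_ideal I -> exists a, eqset I (fun x => exists r, x = r * a).

Definition is_DVR :=
  integral_domain /\ principal_ideal_ring /\ local_ring /\
  exists x : A, x <> 0 /\ ~ is_unit x.

Definition A_linear (M : lmodType A) (f : M -> A) :=
  forall (a : A) (u v : M), f (a *: u + v) = a * f u + f v.

(** trace ideal tr_A(M) = sum of the images of all f in Hom_A(M, A),
    i.e. finite sums of elements f(m). *)
Definition trace (M : lmodType A) : A -> Prop := fun x =>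
  exists (n : nat) (f : 'I_n -> M -> A) (m : 'I_n -> M),
    (forall i, A_linear (f i)) /\ x = \sum_(i < n) f i (m i).

Definition is_trace_ideal (I : A -> Prop) :=
  exists M : lmodType A, eqset I (trace M).

Definition in_calT (I : A -> Prop) :=
  is_trace_ideal I /\ exists x, I x /\ nzd x.

Definition whole : A -> Prop := fun _ => True.

End RingNotions.

Section Fiber.
Variables (k : fieldType) (R1 R2 : comNzRingType).
Variables (pi1 : {rmorphism R1 -> k}) (pi2 : {rmorphism R2 -> k}).

Definition fiberP : pred (R1 * R2)%type := fun p => pi1 p.1 == pi2 p.2.

Lemma fiberP_subring : subring_closed fiberP.
Proof.
split; rewrite /fiberP /=.
- by apply/eqP; rewrite (rmorph1 pi1) (rmorph1 pi2).
- move=> [a b] [c d] /eqP e1 /eqP e2; apply/eqP.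
  by rewrite (rmorphB pi1) (rmorphB pi2) /= e1 e2.
- move=> [a b] [c d] /eqP e1 /eqP e2; apply/eqP.
  by rewrite (rmorphM pi1) (rmorphM pi2) /= e1 e2.
Qed.

HB.instance Definition _ := GRing.isSubringClosed.Build (R1 * R2)%type fiberP
  fiberP_subring.

Record fiber_product := FiberElt {
  fiber_val : (R1 * R2)%type; _ : fiber_val \in fiberP }.

HB.instance Definition _ := [isSub for fiber_val].


HB.instance Definition _ := [Choice of fiber_product by <:].
HB.instance Definition _ := GRing.SubChoice_isSubComNzRing.Build (R1 * R2)%type
  fiberP fiber_product fiberP_subring.

Definition fib1 (r : fiber_product) : R1 := (val r).1.
Definition fib2 (r : fiber_product) : R2 := (val r).2.

(** i_1(I) \oplus i_2(J) = {(x,y) | x in I, y in J} as a subset of R *)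
Definition fiber_sum (I : R1 -> Prop) (J : R2 -> Prop) : fiber_product -> Prop :=
  fun r => I (fib1 r) /\ J (fib2 r).

End Fiber.

(** The set X_j of the theorem, for R_j with maximal ideal ker pi_j. *)
Definition X_set (k : fieldType) (A : comNzRingType) (pi : {rmorphism A -> k})
    (I : A -> Prop) :=
  (is_DVR A /\ eqset I (fun x => pi x = 0)) \/
  (~ is_DVR A /\ in_calT I /\ ~ eqset I (@whole A)).

(* A trace ideal is an ideal I with phi(I) <= I for every phi in Hom(I, A).
   If a trace ideal I of R = R1 x_k R2 contains an element outside the maximal
   ideal, it is R.  Otherwise the projections r |-> i_j(r_j) are R-linear on I,
   so I = i1(I1) + i2(I2) with I_j the image of I in R_j.  A homomorphism
   I1 -> R1 with values in n1 lifts to a homomorphism I -> R, so it preserves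
   I1; one taking a unit value forces I1 = x R1 = n1 for a non-zerodivisor x,
   and then Krull's intersection theorem makes R1 a DVR.  Hence I1 is a trace
   ideal of R1 if R1 is not a DVR, and I1 = n1 if it is.  Conversely, a
   homomorphism of i1(I1) + i2(I2) preserves both summands because i2(z)
   annihilates i1(I1) for a non-zerodivisor z of n2.  The second factor is
   reduced to the first through the isomorphism R1 x_k R2 = R2 x_k R1. *)

From HB Require Import structures.
From mathcomp Require Import all_boot all_order all_algebra.
From mathcomp Require Import ring.
From Stdlib Require Import Classical ClassicalEpsilon.
Set Implicit Arguments. Unset Strict Implicit. Unset Printing Implicit Defensive.
Import GRing.Theory.
Local Open Scope ring_scope.

Section Ideals.
Variable A : comNzRingType.
Implicit Types (I N : A -> Prop) (f : A -> A) (x y : A).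

Lemma ideal0 I : is_ideal I -> I 0.
Proof. by case. Qed.

Lemma idealD I : is_ideal I -> forall x y, I x -> I y -> I (x + y).
Proof. by case=> _ []. Qed.

Lemma idealMl I : is_ideal I -> forall a x, I x -> I (a * x).
Proof. by case=> _ []. Qed.

Lemma ideal_sum I n (F : 'I_n -> A) :
  is_ideal I -> (forall i, I (F i)) -> I (\sum_(i < n) F i).
Proof. by move=> Iid IF; elim/big_ind: _ => //; [exact: ideal0 | exact: idealD]. Qed.

Lemma ideal_eqset I N : eqset I N -> is_ideal N -> is_ideal I.
Proof.
move=> eIN [N0 [ND NM]]; split; first exact/eIN.
by split=> [x y /eIN Ix /eIN Iy | a x /eIN Ix]; apply/eIN; [apply: ND | apply: NM].
Qed.

Lemma ideal_whole_of_unit I x : is_ideal I -> I x -> is_unit x -> eqset I (@whole A).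
Proof.
move=> Iid Ix [y xy1] z; split=> // _.
by rewrite -[z]mulr1 -xy1 mulrA mulrAC; apply: idealMl.
Qed.

Definition linear_on I f :=
  forall a u v, I u -> I v -> f (a * u + v) = a * f u + f v.

Definition hom_stable I := forall f, linear_on I f -> forall x, I x -> I (f x).

Definition hom_stable_in N I :=
  forall f, linear_on I f -> (forall x, I x -> N (f x)) -> forall x, I x -> I (f x).

Lemma linear_on0 I f : I 0 -> linear_on I f -> f 0 = 0.
Proof.
move=> I0 lin_f; have := lin_f 1 0 0 I0 I0; rewrite !mul1r addr0 => f00.
by apply: (@addrI _ (f 0)); rewrite addr0 -f00.
Qed.

Lemma linear_onM I f : I 0 -> linear_on I f -> forall a u, I u -> f (a * u) = a * f u.
Proof.
move=> I0 lin_f a u Iu.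
by have := lin_f a u 0 Iu I0; rewrite !addr0 (linear_on0 I0 lin_f) addr0.
Qed.

Lemma linear_onD I f : linear_on I f -> forall u v, I u -> I v -> f (u + v) = f u + f v.
Proof. by move=> lin_f u v Iu Iv; have := lin_f 1 u v Iu Iv; rewrite !mul1r. Qed.

Lemma A_linear0 (M : lmodType A) (g : M -> A) : A_linear g -> g 0 = 0.
Proof.
move=> lin_g; have := lin_g 1 0 0; rewrite scale1r addr0 mul1r => g00.
by apply: (@addrI _ (g 0)); rewrite addr0 -g00.
Qed.

Lemma trace_ideal (M : lmodType A) : is_ideal (trace M).
Proof.
split.
  exists 0%N, (fun _ _ => 0), (fun _ => 0).
  by split=> [i a u v|]; rewrite ?big_ord0 // mulr0 addr0.
split=> [x y [n [f [m [lin_f ->]]]] [n' [f' [m' [lin_f' ->]]]] | a x [n [f [m [lin_f ->]]]]].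
  exists (n + n')%N, (fun i => match split i with inl j => f j | inr j => f' j end),
    (fun i => match split i with inl j => m j | inr j => m' j end).
  split; first by move=> i; case: (split i).
  rewrite big_split_ord /=; congr (_ + _); apply: eq_bigr => i _.
    by rewrite (unsplitK (inl i : 'I_n + 'I_n')).
  by rewrite (unsplitK (inr i : 'I_n + 'I_n')).
exists n, f, (fun i => a *: m i); split=> //.
rewrite mulr_sumr; apply: eq_bigr => i _.
by have := lin_f i a (m i) 0; rewrite !addr0 (A_linear0 (lin_f i)) addr0.
Qed.

Lemma trace_hom_stable (M : lmodType A) : hom_stable (trace M).
Proof.
move=> phi lin_phi _ [n [f [m [lin_f ->]]]].
have trace_f i u : trace M (f i u).
  by exists 1%N, (fun _ => f i), (fun _ => u); rewrite big_ord1.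
have phi_sum n' (F : 'I_n' -> A) : (forall i, trace M (F i)) ->
    phi (\sum_(i < n') F i) = \sum_(i < n') phi (F i).
  elim: n' F => [|n' IH] F trF.
    by rewrite !big_ord0 (linear_on0 (ideal0 (trace_ideal M)) lin_phi).
  rewrite !big_ord_recr /= (linear_onD lin_phi) ?IH //.
  exact: ideal_sum (trace_ideal M) _.
rewrite phi_sum //; exists n, (fun i u => phi (f i u)), m; split=> // i a u v.
by rewrite lin_f lin_phi.
Qed.

Section IdealModule.
Variable I : A -> Prop.
Hypothesis Iid : is_ideal I.

(* The ideal [I] as an [A]-module: the subtype of [A^o] cut out by a boolean
   (classically decided) copy of [I]. *)
Definition in_ideal : pred A^o :=
  fun x => if excluded_middle_informative (I x) then true else false.

Lemma in_idealE x : in_ideal x <-> I x.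
Proof. by rewrite /in_ideal; case: excluded_middle_informative. Qed.

Lemma in_ideal_submod_closed : submod_closed in_ideal.
Proof.
split=> [|a u v /in_idealE Iu /in_idealE Iv]; apply/in_idealE; first exact: ideal0.
by apply: idealD => //; apply: idealMl.
Qed.

HB.instance Definition _ := GRing.isSubmodClosed.Build A A^o in_ideal
  in_ideal_submod_closed.
Definition ideal_module := {x : A^o | in_ideal x}.
HB.instance Definition _ := [isSub of ideal_module for @sval _ _].
HB.instance Definition _ := [Choice of ideal_module by <:].
HB.instance Definition _ := [SubChoice_isSubLmodule of ideal_module by <:].

Lemma trace_ideal_module : hom_stable I -> eqset I (trace ideal_module).
Proof.
move=> Ihs x; split=> [Ix | [n [f [m [lin_f ->]]]]].
  have Px : in_ideal x by apply/in_idealE.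
  by exists 1%N, (fun _ (u : ideal_module) => val u), (fun _ => exist _ x Px);
    rewrite big_ord1.
apply: ideal_sum => // i.
pose phi z := if (insub z : option ideal_module) is Some u then f i u else 0.
have phiE (u : ideal_module) : phi (val u) = f i u by rewrite /phi valK.
have phiE' z (Pz : in_ideal z) : phi z = f i (exist _ z Pz) by rewrite -phiE.
rewrite -phiE; apply: Ihs; last exact/in_idealE/valP.
move=> a u v Iu Iv.
have [Pu Pv] : in_ideal u /\ in_ideal v by split; apply/in_idealE.
have Puv : in_ideal (a * u + v).
  by apply/in_idealE; apply: idealD => //; apply: idealMl.
rewrite (phiE' _ Pu) (phiE' _ Pv) (phiE' _ Puv) -lin_f.
by congr (f i _); apply: val_inj.
Qed.
End IdealModule.

Lemma trace_idealP I : is_trace_ideal I <-> is_ideal I /\ hom_stable I.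
Proof.
split=> [[M eIM] | [Iid Ihs]]; last by eexists; exact: (trace_ideal_module Iid).
split; first exact: ideal_eqset eIM (trace_ideal M).
move=> f lin_f x /eIM Tx; apply/eIM; apply: trace_hom_stable Tx.
by move=> a u v /eIM Tu /eIM Tv; apply: lin_f.
Qed.

Lemma in_calTP I :
  in_calT I <-> [/\ is_ideal I, hom_stable I & exists x, I x /\ nzd x].
Proof.
split=> [[/trace_idealP [Iid Ihs] nzd_I] | [Iid Ihs nzd_I]]; first by split.
by split=> //; apply/trace_idealP.
Qed.

Lemma in_calT_eqset I N : eqset I N -> in_calT N -> in_calT I.
Proof.
move=> eIN /in_calTP [Nid Nhs [x [Nx nzd_x]]]; apply/in_calTP; split.
- exact: ideal_eqset eIN Nid.
- move=> f lin_f y /eIN Ny; apply/eIN; apply: Nhs Ny.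
  by move=> a u v /eIN Iu /eIN Iv; apply: lin_f.
- by exists x; split=> //; apply/eIN.
Qed.

Lemma in_calT_whole : in_calT (@whole A).
Proof. by apply/in_calTP; split=> //; exists 1; split=> // y; rewrite mul1r. Qed.

Lemma nzd_neq0 x : nzd x -> x != 0.
Proof.
move=> nzd_x; apply/eqP => x0; have := oner_neq0 A.
by rewrite (nzd_x 1) ?eqxx // x0 mul0r.
Qed.

Lemma nzdM x y : nzd x -> nzd y -> nzd (x * y).
Proof. by move=> nzd_x nzd_y z; rewrite -mulrA => /nzd_x /nzd_y. Qed.

Lemma nzdX x n : nzd x -> nzd (x ^+ n).
Proof.
move=> nzd_x; elim: n => [|n IH]; first by move=> z; rewrite expr0 mul1r.
by rewrite exprS; apply: nzdM.
Qed.

Lemma nzdMr x y : nzd (x * y) -> nzd x.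
Proof. by move=> nzd_xy z xz0; apply: nzd_xy; rewrite mulrAC xz0 mul0r. Qed.

Lemma unitM x y : is_unit x -> is_unit y -> is_unit (x * y).
Proof. by move=> [x' xx'] [y' yy']; exists (x' * y'); rewrite mulrACA xx' yy' mulr1. Qed.

Lemma unit_nzd x : is_unit x -> nzd x.
Proof. by move=> [x' xx'] z xz0; rewrite -[z]mul1r -xx' mulrAC xz0 mul0r. Qed.

End Ideals.

Lemma principal_of_hom_unit (A : comNzRingType) (K : A -> Prop) (f : A -> A) (w x u : A) :
  is_ideal K -> K w -> nzd w -> linear_on K f -> K x -> u * f x = 1 ->
  nzd x /\ forall y, K y -> y = x * (u * f y).
Proof.
move=> Kid Kw nzd_w lin_f Kx ufx1.
have fM := linear_onM (ideal0 Kid) lin_f.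
have cross y : K y -> w * f y = y * f w.
  by move=> Ky; rewrite -(fM _ _ Ky) -(fM _ _ Kw) mulrC.
have x_div_w : x * (u * f w) = w by rewrite mulrCA -cross // mulrCA ufx1 mulr1.
have nzd_ufw : nzd (u * f w) by apply: (@nzdMr _ _ x); rewrite mulrC x_div_w.
split; first by apply: (@nzdMr _ _ (u * f w)); rewrite x_div_w.
move=> y Ky; apply/eqP; rewrite -subr_eq0; apply/eqP; apply: nzd_ufw.
have -> : u * f w * (y - x * (u * f y))
    = u * (f w * y - w * f y) - (x * (u * f w) - w) * (u * f y) by ring.
by rewrite x_div_w subrr mul0r subr0 cross // [y * _]mulrC subrr mulr0.
Qed.

Lemma principal_hom_one (A : comNzRingType) (I : A -> Prop) (a : A) :
  integral_domain A -> is_ideal I -> a != 0 -> eqset I (fun y => exists c, y = c * a) ->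
  exists f, linear_on I f /\ f a = 1.
Proof.
move=> Adom Iid a0 eI.
pose f y := epsilon (inhabits 0) (fun c => y = c * a).
have fE y : I y -> y = f y * a.
  by move/eI => Iy; exact: (epsilon_spec (inhabits 0) (fun c => y = c * a) Iy).
have mulIa c c' : c * a = c' * a -> c = c'.
  move=> e; have /Adom [] : (c - c') * a = 0 by rewrite mulrBl e subrr.
    by move/eqP; rewrite subr_eq0 => /eqP.
  by move/eqP; rewrite (negbTE a0).
have Ia : I a by apply/eI; exists 1; rewrite mul1r.
exists f; split; last by apply: mulIa; rewrite -fE // mul1r.
move=> b u v Iu Iv; apply: mulIa.
have Iuv : I (b * u + v) by apply: idealD => //; apply: idealMl.
by rewrite -fE // mulrDl -mulrA -!fE.
Qed.

Section LocalRing.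
Variables (k : fieldType) (A : comNzRingType) (pi : {rmorphism A -> k}).
Hypothesis pi_surj : forall c : k, exists x : A, pi x = c.
Hypothesis Aloc : local_ring A.

Lemma unit_pi_neq0 x : is_unit x -> pi x != 0.
Proof.
move=> [y xy1]; apply/eqP => pix0.
by have := congr1 pi xy1; rewrite rmorphM rmorph1 pix0 mul0r => /eqP; rewrite eq_sym oner_eq0.
Qed.

Lemma unit_of_pi_neq0 x : pi x != 0 -> is_unit x.
Proof.
move=> pix0; apply: NNPP => nunit_x.
have [y piy] := pi_surj (pi x)^-1.
have nunit_xy : ~ is_unit (x * y).
  by move=> [z xyz1]; apply: nunit_x; exists (y * z); rewrite mulrA.
have nunit_1xy : ~ is_unit (1 - x * y).
  move/unit_pi_neq0; rewrite rmorphB rmorph1 rmorphM piy mulfV //.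
  by rewrite subrr eqxx.
by apply: (Aloc nunit_xy nunit_1xy); exists 1; rewrite mulr1 addrC subrK.
Qed.

Lemma max_ideal_sub_of_hom_unit (K : A -> Prop) (f : A -> A) x :
  is_ideal K -> hom_stable_in (fun y => pi y = 0) K -> linear_on K f ->
  K x -> pi (f x) != 0 -> forall m, pi m = 0 -> K m.
Proof.
move=> Kid Khs lin_f Kx /unit_of_pi_neq0 [u fxu1] m pim0.
have lin_g : linear_on K (fun y => m * (u * f y)).
  by move=> a y z Ky Kz; rewrite lin_f //; ring.
have := Khs _ lin_g _ x Kx; rewrite [u * _]mulrC fxu1 mulr1; apply.
by move=> y _; rewrite rmorphM pim0 mul0r.
Qed.

Section PrincipalMaximalIdeal.
Hypothesis Anoeth : noetherian A.
Variable x : A.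
Hypothesis nzd_x : nzd x.
Hypothesis pix0 : pi x = 0.
Hypothesis max_principal : forall m, pi m = 0 -> exists c, m = x * c.

Lemma krull_intersection y : (forall n, exists c, y = x ^+ n * c) -> y = 0.
Proof.
move=> y_div.
pose J n z := exists r, z * x ^+ n = r * y.
have Jid n : is_ideal (J n).
  split; first by exists 0; rewrite !mul0r.
  split=> [a b [r ar] [s bs] | a z [r zr]].
    by exists (r + s); rewrite mulrDl ar bs mulrDl.
  by exists (a * r); rewrite -mulrA zr mulrA.
have Jincr n z : J n z -> J n.+1 z.
  by move=> [r zr]; exists (r * x); rewrite exprSr mulrA zr mulrAC.
have [N JN] := Anoeth Jid Jincr.
have [c yc] := y_div N.+1.
have [r cr] : J N c by apply/(JN N.+1 (leqnSn N)); exists 1; rewrite mul1r yc mulrC.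
have unit_1rx : is_unit (1 - r * x).
  by apply: unit_of_pi_neq0; rewrite rmorphB rmorph1 rmorphM pix0 mulr0 subr0 oner_eq0.
have : x ^+ N * (c * (1 - r * x)) = 0.
  have -> : x ^+ N * (c * (1 - r * x)) = c * x ^+ N - r * (x ^+ N.+1 * c).
    by rewrite exprSr; ring.
  by rewrite cr yc subrr.
move/(nzdX (n := N) nzd_x)/eqP; rewrite mulrC => /eqP /(unit_nzd unit_1rx) c0.
by rewrite yc c0 mulr0.
Qed.

Lemma power_times_unit y : y != 0 -> exists n u, is_unit u /\ y = x ^+ n * u.
Proof.
move=> y0; have [n not_div] : exists n, ~ exists c, y = x ^+ n * c.
  apply: NNPP => all_div; move/eqP: y0; apply; apply: krull_intersection => n.
  by apply: NNPP => not_div; apply: all_div; exists n.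
elim: n y {y0} not_div => [|n IH] y not_div; first by case: not_div; exists y; rewrite mul1r.
have [[c yc] | ] := classic (exists c, y = x ^+ n * c); last exact: IH.
exists n, c; split=> //; apply: unit_of_pi_neq0; apply/eqP => /max_principal [d cd].
by apply: not_div; exists d; rewrite yc cd exprSr mulrA.
Qed.

Lemma principal_max_domain : integral_domain A.
Proof.
move=> y z yz0; apply: NNPP => /not_or_and [/eqP y0 /eqP z0].
have [a [u [unit_u ey]]] := power_times_unit y0.
have [b [v [unit_v ez]]] := power_times_unit z0.
have : x ^+ (a + b) * (u * v) = 0 by rewrite exprD mulrACA -ey -ez.
move/(nzdX (n := a + b) nzd_x) => uv0.
by have := unit_pi_neq0 (unitM unit_u unit_v); rewrite uv0 rmorph0 eqxx.
Qed.

Lemma principal_max_PIR : principal_ideal_ring A.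
Proof.
move=> I Iid.
have [[y [Iy y0]] | I0] := classic (exists y, I y /\ y <> 0); last first.
  exists 0 => z; split=> [Iz | [r ->]]; last by rewrite mulr0; exact: ideal0.
  by exists 0; rewrite mulr0; apply: NNPP => z0; apply: I0; exists z.
have I_power z : I z -> z != 0 -> exists n, I (x ^+ n) /\ exists v, z = x ^+ n * v.
  move=> Iz z0; have [n [v [[w vw1] ez]]] := power_times_unit z0.
  exists n; split; last by exists v.
  by have := idealMl Iid w Iz; rewrite ez mulrC -mulrA vw1 mulr1.
pose P n := if excluded_middle_informative (I (x ^+ n)) then true else false.
have PE n : P n <-> I (x ^+ n) by rewrite /P; case: excluded_middle_informative.
have [n0 [In0 _]] := I_power y Iy (introN eqP y0).
have [n /PE In n_min] := ex_minnP (ex_intro P n0 (proj2 (PE n0) In0)).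
exists (x ^+ n) => z; split=> [Iz | [r ->]]; last exact: idealMl.
have [-> | z0] := eqVneq z 0; first by exists 0; rewrite mul0r.
have [j [Ij [v ->]]] := I_power z Iz z0.
have le_nj : (n <= j)%N by apply: n_min; apply/PE.
by exists (x ^+ (j - n) * v); rewrite mulrAC -exprD subnK.
Qed.

Lemma principal_max_DVR : is_DVR A.
Proof.
split; first exact: principal_max_domain.
split; first exact: principal_max_PIR.
split=> //; exists x; split; first exact/eqP/nzd_neq0.
by move/unit_pi_neq0; rewrite pix0 eqxx.
Qed.
End PrincipalMaximalIdeal.

(* The conditions characterising the members of the set X_j of the theorem. *)
Definition max_stable (I : A -> Prop) :=
  [/\ is_ideal I, forall x, I x -> pi x = 0, exists x, I x /\ nzd x
     & hom_stable_in (fun x => pi x = 0) I].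

Lemma ker_ideal : is_ideal (fun x => pi x = 0).
Proof.
split; first exact: rmorph0.
by split=> [x y px py | a x px]; rewrite ?rmorphD ?rmorphM px ?py ?addr0 ?mulr0.
Qed.

Lemma X_set_max_stable (I : A -> Prop) :
  (exists x, pi x = 0 /\ nzd x) -> X_set pi I -> max_stable I.
Proof.
move=> [z [piz0 nzd_z]]; case=> [[_ eI] | [_ [/in_calTP [Iid Ihs nzd_I] I_proper]]].
  split; [exact: ideal_eqset eI ker_ideal | by move=> x /eI | |].
    by exists z; split=> //; apply/eI.
  by move=> f _ f_ker x Ix; apply/eI; exact: f_ker.
split=> // [x Ix | f lin_f _]; last exact: Ihs.
apply: NNPP => /eqP /unit_of_pi_neq0 unit_x; apply: I_proper.
exact: ideal_whole_of_unit Iid Ix unit_x.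
Qed.

Lemma X_set_of_max_stable (I : A -> Prop) : noetherian A -> max_stable I -> X_set pi I.
Proof.
move=> Anoeth [Iid Iker [w [Iw nzd_w]] Ihs].
have [Advr | Andvr] := classic (is_DVR A).
  left; split=> // x; split=> [/Iker // | pix0].
  have [Adom [Apir _]] := Advr; have [a eI] := Apir I Iid.
  have a0 : a != 0.
    apply/eqP => a0; have [c wc] := proj1 (eI w) Iw.
    by have := nzd_neq0 nzd_w; rewrite wc a0 mulr0 eqxx.
  have [f [lin_f fa1]] := principal_hom_one Adom Iid a0 eI.
  have Ia : I a by apply/eI; exists 1; rewrite mul1r.
  by apply: (max_ideal_sub_of_hom_unit Iid Ihs lin_f Ia _ pix0); rewrite fa1 rmorph1 oner_eq0.
right; split=> //; split; last first.
  by move=> I_whole; have /eqP := Iker 1 (proj2 (I_whole 1) Logic.I); rewrite rmorph1 oner_eq0.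
apply/in_calTP; split=> //; last by exists w.
move=> f lin_f.
have [[y [Iy pify0]] | f_ker] := classic (exists y, I y /\ pi (f y) != 0); last first.
  apply: Ihs => // y Iy; apply/eqP/negbNE/negP => pify0.
  by apply: f_ker; exists y.
exfalso; apply: Andvr.
have [u ufy1] := unit_of_pi_neq0 pify0.
have [nzd_y y_gen] := principal_of_hom_unit Iid Iw nzd_w lin_f Iy (etrans (mulrC _ _) ufy1).
apply: (principal_max_DVR Anoeth nzd_y (Iker _ Iy)) => m pim0.
by exists (u * f m); apply/y_gen/(max_ideal_sub_of_hom_unit Iid Ihs lin_f Iy pify0).
Qed.
End LocalRing.

Section FiberProduct.
Variables (k : fieldType) (R1 R2 : comNzRingType).
Variables (pi1 : {rmorphism R1 -> k}) (pi2 : {rmorphism R2 -> k}).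
Local Notation R := (fiber_product pi1 pi2).

HB.instance Definition _ := GRing.RMorphism.copy (@fib1 k R1 R2 pi1 pi2) (fst \o val).
HB.instance Definition _ := GRing.RMorphism.copy (@fib2 k R1 R2 pi1 pi2) (snd \o val).

Lemma pi_fib (r : R) : pi1 (fib1 r) = pi2 (fib2 r).
Proof. exact/eqP/(valP r). Qed.

Lemma fiber_ext (r s : R) : fib1 r = fib1 s -> fib2 r = fib2 s -> r = s.
Proof.
move=> e1 e2; apply: val_inj.
by rewrite [val r]surjective_pairing [val s]surjective_pairing; congr pair.
Qed.

(* Pairs outside the fiber product are sent to 0. *)
Definition fiber_pair (a : R1) (b : R2) : R := insubd 0 (a, b).
Definition i1 (s : R1) : R := fiber_pair s 0.
Definition i2 (t : R2) : R := fiber_pair 0 t.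

Lemma fiber_pairK a b : pi1 a = pi2 b -> val (fiber_pair a b) = (a, b).
Proof. by move=> eab; rewrite /fiber_pair insubdK //; apply/eqP. Qed.

Lemma fib1_pair a b : pi1 a = pi2 b -> fib1 (fiber_pair a b) = a.
Proof. by move=> /fiber_pairK; rewrite /fib1 => ->. Qed.

Lemma fib2_pair a b : pi1 a = pi2 b -> fib2 (fiber_pair a b) = b.
Proof. by move=> /fiber_pairK; rewrite /fib2 => ->. Qed.

Lemma fib1_i1 s : pi1 s = 0 -> fib1 (i1 s) = s.
Proof. by move=> pis0; rewrite fib1_pair // pis0 rmorph0. Qed.

Lemma fib2_i1 s : pi1 s = 0 -> fib2 (i1 s) = 0.
Proof. by move=> pis0; rewrite fib2_pair // pis0 rmorph0. Qed.

Lemma fib1_i2 t : pi2 t = 0 -> fib1 (i2 t) = 0.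
Proof. by move=> pit0; rewrite fib1_pair // pit0 rmorph0. Qed.

Lemma fib2_i2 t : pi2 t = 0 -> fib2 (i2 t) = t.
Proof. by move=> pit0; rewrite fib2_pair // pit0 rmorph0. Qed.

Lemma i1_0 : i1 0 = 0.
Proof. by apply: fiber_ext; rewrite ?fib1_i1 ?fib2_i1 ?rmorph0. Qed.

Lemma mulr_i1 (r : R) s : pi1 s = 0 -> r * i1 s = i1 (fib1 r * s).
Proof.
move=> pis0; have pirs0 : pi1 (fib1 r * s) = 0 by rewrite rmorphM pis0 mulr0.
by apply: fiber_ext; rewrite rmorphM /= ?fib1_i1 ?fib2_i1 ?mulr0.
Qed.

Lemma i1D s s' : pi1 s = 0 -> pi1 s' = 0 -> i1 (s + s') = i1 s + i1 s'.
Proof.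
move=> pis0 pis'0; have piss'0 : pi1 (s + s') = 0 by rewrite rmorphD pis0 pis'0 addr0.
by apply: fiber_ext; rewrite rmorphD /= ?fib1_i1 ?fib2_i1 ?addr0.
Qed.

Lemma fiber_decomp (r : R) : pi1 (fib1 r) = 0 -> r = i1 (fib1 r) + i2 (fib2 r).
Proof.
move=> pir0; have pir0' : pi2 (fib2 r) = 0 by rewrite -pi_fib.
by apply: fiber_ext; rewrite rmorphD /= ?fib1_i1 ?fib1_i2 ?fib2_i1 ?fib2_i2 ?addr0 ?add0r.
Qed.

Lemma fib1_surj : (forall c, exists y : R2, pi2 y = c) -> forall a, exists r : R, fib1 r = a.
Proof.
by move=> surj2 a; have [b pib] := surj2 (pi1 a); exists (fiber_pair a b); rewrite fib1_pair.
Qed.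

Lemma unit_fiber (r : R) :
  (forall c, exists x : R1, pi1 x = c) -> (forall c, exists y : R2, pi2 y = c) ->
  local_ring R1 -> local_ring R2 -> pi1 (fib1 r) != 0 -> is_unit r.
Proof.
move=> surj1 surj2 loc1 loc2 pir1; have pir2 : pi2 (fib2 r) != 0 by rewrite -pi_fib.
have [s1 rs1] := unit_of_pi_neq0 surj1 loc1 pir1.
have [s2 rs2] := unit_of_pi_neq0 surj2 loc2 pir2.
have pis : pi1 s1 = pi2 s2.
  have := congr1 pi1 rs1; rewrite rmorphM rmorph1 => /mulr1_eq <-.
  by rewrite pi_fib; have := congr1 pi2 rs2; rewrite rmorphM rmorph1 => /mulr1_eq <-.
exists (fiber_pair s1 s2).
by apply: fiber_ext; rewrite rmorphM /= ?fib1_pair ?fib2_pair ?rs1 ?rs2 ?rmorph1.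
Qed.

Lemma nzd_fib1 (w : R) : (exists x, pi1 x = 0 /\ nzd x) -> nzd w -> nzd (fib1 w).
Proof.
move=> [x [pix0 nzd_x]] nzd_w y wy0; apply: nzd_x; rewrite mulrC.
have piyx0 : pi1 (y * x) = 0 by rewrite rmorphM pix0 mulr0.
rewrite -(fib1_i1 piyx0) (nzd_w (i1 (y * x))) ?rmorph0 //.
by rewrite mulr_i1 // mulrA wy0 mul0r i1_0.
Qed.
End FiberProduct.

Section FiberSwap.
Variables (k : fieldType) (R1 R2 : comNzRingType).
Variables (pi1 : {rmorphism R1 -> k}) (pi2 : {rmorphism R2 -> k}).
Local Notation R := (fiber_product pi1 pi2).

Lemma fiber_swap_subproof (r : R) : (fib2 r, fib1 r) \in fiberP pi2 pi1.
Proof. by rewrite unfold_in /fiberP /= -pi_fib. Qed.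

Definition fiber_swap (r : R) : fiber_product pi2 pi1 := FiberElt (fiber_swap_subproof r).

Lemma fib1_swap r : fib1 (fiber_swap r) = fib2 r. Proof. by []. Qed.
Lemma fib2_swap r : fib2 (fiber_swap r) = fib1 r. Proof. by []. Qed.

Lemma fiber_swap_is_nmod_morphism : GRing.nmod_morphism fiber_swap.
Proof. by split=> [|r s]; apply: val_inj. Qed.

Lemma fiber_swap_is_monoid_morphism : GRing.monoid_morphism fiber_swap.
Proof. by split=> [|r s]; apply: val_inj. Qed.

HB.instance Definition _ := GRing.isNmodMorphism.Build _ _ fiber_swap
  fiber_swap_is_nmod_morphism.
HB.instance Definition _ := GRing.isMonoidMorphism.Build _ _ fiber_swap
  fiber_swap_is_monoid_morphism.
End FiberSwap.

Section FiberSwapTheory.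
Variables (k : fieldType) (R1 R2 : comNzRingType).
Variables (pi1 : {rmorphism R1 -> k}) (pi2 : {rmorphism R2 -> k}).

Lemma fiber_swapK : cancel (@fiber_swap _ _ _ pi1 pi2) (@fiber_swap _ _ _ pi2 pi1).
Proof. by move=> r; apply: fiber_ext. Qed.

Lemma fiber_swap_i1 t : pi2 t = 0 -> fiber_swap (i1 pi2 pi1 t) = i2 pi1 pi2 t.
Proof.
move=> pit0; apply: fiber_ext.
  by rewrite fib1_swap fib1_i2 ?fib2_i1.
by rewrite fib2_swap fib2_i2 ?fib1_i1.
Qed.
End FiberSwapTheory.

Section RingIsoTransport.
Variables (A B : comNzRingType) (phi : {rmorphism A -> B}) (psi : {rmorphism B -> A}).
Hypotheses (phiK : cancel phi psi) (psiK : cancel psi phi).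

Lemma linear_on_iso (I : A -> Prop) f :
  linear_on I f -> linear_on (I \o psi) (phi \o f \o psi).
Proof.
by move=> lin_f a u v Iu Iv /=; rewrite rmorphD rmorphM lin_f // rmorphD rmorphM psiK.
Qed.

Lemma in_calT_iso (I : A -> Prop) : in_calT I -> in_calT (I \o psi).
Proof.
case/in_calTP=> Iid Ihs [w [Iw nzd_w]]; apply/in_calTP; split.
- split; first by rewrite /= rmorph0; exact: ideal0.
  split=> [x y Ix Iy | a x Ix]; rewrite /= ?rmorphD ?rmorphM.
    exact: idealD.
  exact: idealMl.
- move=> g lin_g x Ix; have lin_f : linear_on I (psi \o g \o phi).
    move=> a u v Iu Iv /=.
    by rewrite rmorphD rmorphM lin_g /= ?phiK // rmorphD rmorphM phiK.
  by have := Ihs _ lin_f _ Ix; rewrite /= psiK.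
- exists (phi w); split; first by rewrite /= phiK.
  move=> y /(congr1 psi); rewrite rmorphM rmorph0 phiK => /nzd_w psiy0.
  by rewrite -[y]psiK psiy0 rmorph0.
Qed.
End RingIsoTransport.

Section TraceIdealComponent.
Variables (k : fieldType) (R1 R2 : comNzRingType).
Variables (pi1 : {rmorphism R1 -> k}) (pi2 : {rmorphism R2 -> k}).
Local Notation R := (fiber_product pi1 pi2).
Variable I : R -> Prop.
Hypotheses (I_calT : in_calT I) (I_max : forall r, I r -> pi1 (fib1 r) = 0).

Definition fib1_image (s : R1) := exists r, I r /\ fib1 r = s.

Lemma fib1_image_max s : fib1_image s -> pi1 s = 0.
Proof. by case=> r [Ir <-]; exact: I_max. Qed.

Lemma fib1_image_ideal : (forall c, exists y : R2, pi2 y = c) -> is_ideal fib1_image.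
Proof.
move=> surj2; have [Iid _ _] := (in_calTP I).1 I_calT.
split; first by exists 0; split; [exact: ideal0 | exact: rmorph0].
split=> [_ _ [r [Ir <-]] [s [Is <-]] | a _ [r [Ir <-]]].
  by exists (r + s); split; [exact: idealD | exact: rmorphD].
have [ra <-] := fib1_surj pi1 surj2 a.
by exists (ra * r); split; [exact: idealMl | exact: rmorphM].
Qed.

Lemma i1_hom_fib1_mem (g : R1 -> R1) r :
  linear_on fib1_image g -> (forall s, fib1_image s -> pi1 (g s) = 0) ->
  I r -> I (i1 pi1 pi2 (g (fib1 r))).
Proof.
move=> lin_g g_max Ir; have [_ Ihs _] := (in_calTP I).1 I_calT.
apply: (Ihs (fun r => i1 pi1 pi2 (g (fib1 r)))) => // a u v Iu Iv.
have [Fu Fv] : fib1_image (fib1 u) /\ fib1_image (fib1 v) by split; [exists u | exists v].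
rewrite rmorphD rmorphM /= lin_g // i1D ?mulr_i1 ?g_max //.
by rewrite rmorphM g_max // mulr0.
Qed.

Lemma i1_fib1_mem r : I r -> I (i1 pi1 pi2 (fib1 r)).
Proof. by apply: (i1_hom_fib1_mem (g := id)) => // s; exact: fib1_image_max. Qed.

Lemma max_stable_fib1_image :
  (forall c, exists y : R2, pi2 y = c) -> (exists x, pi1 x = 0 /\ nzd x) ->
  max_stable pi1 fib1_image.
Proof.
move=> surj2 depth1; have [_ _ [w [Iw nzd_w]]] := (in_calTP I).1 I_calT.
split; [exact: fib1_image_ideal | exact: fib1_image_max | |].
  by exists (fib1 w); split; [exists w | exact: nzd_fib1].
move=> g lin_g g_max _ [r [Ir <-]].
exists (i1 pi1 pi2 (g (fib1 r))); split; first exact: i1_hom_fib1_mem.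
by rewrite fib1_i1 //; apply: g_max; exists r.
Qed.
End TraceIdealComponent.

Section HomOnComponent.
Variables (k : fieldType) (R1 R2 : comNzRingType).
Variables (pi1 : {rmorphism R1 -> k}) (pi2 : {rmorphism R2 -> k}).
Local Notation R := (fiber_product pi1 pi2).
Variables (I1 : R1 -> Prop) (L : R -> Prop) (F : R -> R).
Hypotheses (I1_max : forall s, I1 s -> pi1 s = 0)
  (I1_stable : hom_stable_in (fun s => pi1 s = 0) I1).
Hypotheses (L0 : L 0) (L_i1 : forall s, I1 s -> L (i1 pi1 pi2 s)) (lin_F : linear_on L F).

(* [i2 z] kills [i1 s], so [i2 z * F (i1 s) = F 0 = 0] for a non-zerodivisor [z]. *)
Lemma fib2_hom_i1 s : (exists z, pi2 z = 0 /\ nzd z) -> I1 s -> fib2 (F (i1 pi1 pi2 s)) = 0.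
Proof.
move=> [z [piz0 nzd_z]] I1s; apply: nzd_z.
have zs0 : i2 pi1 pi2 z * i1 pi1 pi2 s = 0.
  by rewrite mulr_i1 ?fib1_i2 ?mul0r ?i1_0 ?I1_max.
have := linear_onM L0 lin_F (i2 pi1 pi2 z) (L_i1 I1s).
rewrite zs0 (linear_on0 L0 lin_F) => /(congr1 (fun r => fib2 r)).
by rewrite rmorphM rmorph0 /= fib2_i2.
Qed.

Lemma fib1_hom_i1 s : (forall c, exists y : R2, pi2 y = c) -> (exists z, pi2 z = 0 /\ nzd z) ->
  I1 s -> I1 (fib1 (F (i1 pi1 pi2 s))).
Proof.
move=> surj2 depth2 I1s.
apply: (@I1_stable (fun s => fib1 (F (i1 pi1 pi2 s))) _ _ s I1s) => [a u v I1u I1v | t I1t].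
  have [ra <-] := fib1_surj pi1 surj2 a.
  have [piu0 piv0] := (I1_max I1u, I1_max I1v).
  have piru0 : pi1 (fib1 ra * u) = 0 by rewrite rmorphM piu0 mulr0.
  by rewrite i1D // -mulr_i1 // lin_F ?rmorphD ?rmorphM //; exact: L_i1.
by rewrite pi_fib fib2_hom_i1 // rmorph0.
Qed.
End HomOnComponent.

Section FiberTraceIdeals.
Variables (k : fieldType) (R1 R2 : comNzRingType).
Variables (pi1 : {rmorphism R1 -> k}) (pi2 : {rmorphism R2 -> k}).
Local Notation R := (fiber_product pi1 pi2).
Local Notation swap := (@fiber_swap _ _ _ pi1 pi2).
Local Notation unswap := (@fiber_swap _ _ _ pi2 pi1).

Lemma fiber_swap_max (I : R -> Prop) : (forall r, I r -> pi1 (fib1 r) = 0) ->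
  forall r, (I \o unswap) r -> pi2 (fib1 r) = 0.
Proof. by move=> I_max r /I_max; rewrite fib1_swap pi_fib. Qed.

Lemma fiber_sum_fib1_image (I : R -> Prop) :
  in_calT I -> (forall r, I r -> pi1 (fib1 r) = 0) ->
  eqset I (fiber_sum (pi1 := pi1) (pi2 := pi2) (fib1_image I) (fib1_image (I \o unswap))).
Proof.
move=> I_calT I_max z; split=> [Iz | [[r1 [Ir1 r1z]] [r2 [Ir2 r2z]]]].
  by split; [exists z | exists (swap z); rewrite /= fiber_swapK].
have [Iid _ _] := (in_calTP I).1 I_calT.
have I'_calT := in_calT_iso (@fiber_swapK _ _ _ pi1 pi2) (@fiber_swapK _ _ _ pi2 pi1) I_calT.
have pir2 : pi2 (fib1 r2) = 0 := fiber_swap_max I_max Ir2.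
have := i1_fib1_mem I'_calT (fiber_swap_max I_max) Ir2; rewrite /= fiber_swap_i1 // r2z => Iz2.
have := i1_fib1_mem I_calT I_max Ir1; rewrite r1z => Iz1.
have piz0 : pi1 (fib1 z) = 0 by rewrite -r1z; exact: I_max.
by rewrite (fiber_decomp piz0); apply: idealD.
Qed.

Section FiberSum.
Variables (I1 : R1 -> Prop) (J : R2 -> Prop).
Hypotheses (surj1 : forall c, exists x : R1, pi1 x = c)
  (surj2 : forall c, exists y : R2, pi2 y = c).
Hypotheses (depth1 : exists x, pi1 x = 0 /\ nzd x) (depth2 : exists y, pi2 y = 0 /\ nzd y).
Hypotheses (I1_stable : max_stable pi1 I1) (J_stable : max_stable pi2 J).
Local Notation L := (fiber_sum (pi1 := pi1) (pi2 := pi2) I1 J).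

Lemma fiber_sum_ideal : is_ideal L.
Proof.
have [[I1id _ _ _] [Jid _ _ _]] := (I1_stable, J_stable).
split; first by split; exact: ideal0.
split=> [u v [I1u Ju] [I1v Jv] | c u [I1u Ju]]; split; rewrite /= ?rmorphD ?rmorphM.
- exact: idealD.
- exact: idealD.
- exact: idealMl.
- exact: idealMl.
Qed.

Lemma fiber_sum_i1 s : I1 s -> L (i1 pi1 pi2 s).
Proof.
have [[_ I1max _ _] [Jid _ _ _]] := (I1_stable, J_stable).
by move=> I1s; split; rewrite ?fib1_i1 ?fib2_i1 ?I1max //; exact: ideal0.
Qed.

Lemma fiber_sum_i2 t : J t -> L (i2 pi1 pi2 t).
Proof.
have [[I1id _ _ _] [_ Jmax _ _]] := (I1_stable, J_stable).
by move=> Jt; split; rewrite ?fib1_i2 ?fib2_i2 ?Jmax //; exact: ideal0.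
Qed.

Lemma fiber_sum_hom_i2 F t : linear_on L F -> J t ->
  fib1 (F (i2 pi1 pi2 t)) = 0 /\ J (fib2 (F (i2 pi1 pi2 t))).
Proof.
move=> lin_F Jt; have [_ Jmax _ Jhs] := J_stable.
have lin_F' := linear_on_iso (@fiber_swapK _ _ _ pi2 pi1) lin_F.
have L'0 : (L \o unswap) 0 by rewrite /= rmorph0; exact: ideal0 fiber_sum_ideal.
have L'_i1 t' : J t' -> (L \o unswap) (i1 pi2 pi1 t').
  by move=> Jt'; rewrite /= fiber_swap_i1 ?Jmax //; exact: fiber_sum_i2.
have := fib2_hom_i1 Jmax L'0 L'_i1 lin_F' depth1 Jt.
have := fib1_hom_i1 Jmax Jhs L'0 L'_i1 lin_F' surj1 depth1 Jt.
by rewrite /= fiber_swap_i1 ?Jmax.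
Qed.

Lemma fiber_sum_hom_stable : hom_stable L.
Proof.
have [[_ I1max _ I1hs] [_ Jmax _ _]] := (I1_stable, J_stable).
move=> F lin_F r [I1r Jr]; have pir0 := I1max _ I1r.
have L0 := ideal0 fiber_sum_ideal.
have [F2_1 F2_2] := fiber_sum_hom_i2 lin_F Jr.
have F1_2 := fib2_hom_i1 I1max L0 fiber_sum_i1 lin_F depth2 I1r.
have F1_1 := fib1_hom_i1 I1max I1hs L0 fiber_sum_i1 lin_F surj2 depth2 I1r.
rewrite (fiber_decomp pir0) (linear_onD lin_F (fiber_sum_i1 I1r) (fiber_sum_i2 Jr)).
by split; rewrite rmorphD /= ?F2_1 ?F1_2 ?addr0 ?add0r.
Qed.

Lemma in_calT_fiber_sum : in_calT L.
Proof.
have [[_ I1max [a [I1a nzd_a]] _] [_ Jmax [b [Jb nzd_b]] _]] := (I1_stable, J_stable).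
have piab : pi1 a = pi2 b by rewrite I1max ?Jmax.
apply/in_calTP; split; [exact: fiber_sum_ideal | exact: fiber_sum_hom_stable |].
exists (fiber_pair pi1 pi2 a b); split; first by split; rewrite ?fib1_pair ?fib2_pair.
move=> y aby0; apply: fiber_ext; rewrite rmorph0.
  by apply: nzd_a; rewrite -(fib1_pair piab) -rmorphM aby0 rmorph0.
by apply: nzd_b; rewrite -(fib2_pair piab) -rmorphM aby0 rmorph0.
Qed.
End FiberSum.
End FiberTraceIdeals.

Theorem theorem5p1 (k : fieldType) (R1 R2 : comNzRingType)
    (pi1 : {rmorphism R1 -> k}) (pi2 : {rmorphism R2 -> k})
    (surj1 : forall c : k, exists x : R1, pi1 x = c)
    (surj2 : forall c : k, exists y : R2, pi2 y = c)
    (noeth1 : noetherian R1) (noeth2 : noetherian R2)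
    (loc1 : local_ring R1) (loc2 : local_ring R2)
    (depth1 : exists x : R1, pi1 x = 0 /\ nzd x)
    (depth2 : exists y : R2, pi2 y = 0 /\ nzd y) :
  forall I : fiber_product pi1 pi2 -> Prop,
    in_calT I <->
    ((exists (I1 : R1 -> Prop) (J : R2 -> Prop),
        X_set pi1 I1 /\ X_set pi2 J /\ eqset I (fiber_sum (pi1:=pi1) (pi2:=pi2) I1 J))
     \/ eqset I (@whole _)).
Proof.
move=> I; split=> [I_calT | [[I1 [J [X1 [X2 eI]]]] | eI]]; last 2 first.
- apply: (in_calT_eqset eI); apply: in_calT_fiber_sum => //; exact: X_set_max_stable.
- apply: (in_calT_eqset eI); exact: in_calT_whole.
have [[r [Ir pir]] | I_max] := classic (exists r, I r /\ pi1 (fib1 r) != 0).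
  have [Iid _ _] := (in_calTP I).1 I_calT.
  by right; exact: ideal_whole_of_unit Iid Ir (unit_fiber surj1 surj2 loc1 loc2 pir).
have {}I_max r : I r -> pi1 (fib1 r) = 0.
  by move=> Ir; apply/eqP/negbNE/negP => pir; apply: I_max; exists r.
have I'_calT := in_calT_iso (@fiber_swapK _ _ _ pi1 pi2) (@fiber_swapK _ _ _ pi2 pi1) I_calT.
left; exists (fib1_image I), (fib1_image (I \o @fiber_swap _ _ _ pi2 pi1)); split; [|split].
- exact: (X_set_of_max_stable surj1 loc1 noeth1
    (max_stable_fib1_image I_calT I_max surj2 depth1)).
- exact: (X_set_of_max_stable surj2 loc2 noeth2
    (max_stable_fib1_image I'_calT (fiber_swap_max I_max) surj1 depth2)).
- exact: fiber_sum_fib1_image.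
Qed.
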